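(* Let $T=\{0,\dots,N\}$ and $\mathbb{F}$ a field. Let $C_\bullet$, $C'_\bullet$ be filtrations of finite-dimensional chain complexes $C$, $C'$ over $\mathbb{F}$ with filtration compatible ordered bases $\mathfrak{C}=(c_1,\dots,c_n)$, $\mathfrak{C}'=(c'_1,\dots,c'_n)$ and filtration boundary matrices $D$, $D'$. Let $\varphi_\bullet\colon C_\bullet\to C'_\bullet$ be an injective morphism of filtrations of chain complexes with $\varphi=\varphi_N$ an isomorphism, $F$ its matrix with respect to $\mathfrak{C},\mathfrak{C}'$, and $D^{\varphi}=DF^{-1}=F^{-1}D'$. Let $V$, $V^{\varphi}$ be invertible upper-triangular matrices such that $R=DV$ and $R^{\varphi}=D^{\varphi}V^{\varphi}$ are reduced; interpret columns of $R^{\varphi}$ as elements of $C$ via coordinates in $\mathfrak{C}$ and columns of $V^{\varphi}$ and $FR^{\varphi}$ as elements of $C'$ via coordinates in $\mathfrak{C}'$. Then $\mathfrak{B}=\operatorname{cols}FR^{\varphi}$ is a filtration compatible basis for the filtration $\varphi_\bullet(Z_*(C_\bullet))\cap B_*(C'_\bullet)$, $t\mapsto\varphi_t(\ker\partial|_{C_t})\cap\partial(C'_t)$, and for all $j$ with $r^{\varphi}_j\neq0$, \[ \operatorname{supp}_{\varphi_\bullet(Z_*(C_\bullet))\cap B_*(C'_\bullet)}(Fr^{\varphi}_j)=\operatorname{supp}_{C_\bullet}(r^{\varphi}_j)\cap\operatorname{supp}_{C'_\bullet}(v^{\varphi}_j). \]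
   Context: A chain complex is a finite-dimensional graded vector space with differential $\partial$ of degree $-1$, $\partial^2=0$; a filtration of chain complexes is a chain of subcomplexes $C_0\subseteq\dots\subseteq C_N=C$. Support: $\operatorname{supp}_{M_\bullet}(m)=\{t\mid m\in M_t\}$. A basis $\mathfrak{M}$ of $M_N$ is filtration compatible if $\mathfrak{M}\cap M_t$ is a basis of $M_t$ for all $t$; an ordered such basis is a filtration compatible ordered basis if $m\le m'$ implies $\operatorname{supp}(m')\subseteq\operatorname{supp}(m)$. The filtration boundary matrix is the matrix of $\partial$ in that basis. For a matrix $X$, $x_j$ is its $j$-th column, $\operatorname{cols}X$ the family of its nonzero columns; $\operatorname{piv}x_j$ is the largest row index of a nonzero entry of a nonzero column; $X$ is reduced if no two nonzero columns have the same pivot. *)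

From HB Require Import structures.
From mathcomp Require Import all_boot all_order all_algebra.
Set Implicit Arguments. Unset Strict Implicit. Unset Printing Implicit Defensive.
Import GRing.Theory.
Local Open Scope ring_scope.

Section Defs.
Variable F : fieldType.

Definition chain_complex (U : vectType F) (d : 'End(U)) : Prop :=
  (d \o d = 0)%VF.

Definition filtration_of_complexes (U : vectType F) (N : nat) (d : 'End(U))
  (Ct : 'I_N.+1 -> {vspace U}) : Prop :=
  [/\ forall s t : 'I_N.+1, (s <= t)%N -> (Ct s <= Ct t)%VS,
      forall t, (d @: Ct t <= Ct t)%VS
    & Ct ord_max = fullv].

Definition supp (U : vectType F) (N : nat) (Mt : 'I_N.+1 -> {vspace U}) (m : U)
  : {set 'I_N.+1} := [set t | m \in Mt t].

Definition filt_compatible (U : vectType F) (N : nat) (Mt : 'I_N.+1 -> {vspace U})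
  (B : seq U) : Prop :=
  basis_of (Mt ord_max) B /\
  forall t, basis_of (Mt t) [seq b <- B | b \in Mt t].

Definition filt_ordered_basis (U : vectType F) (N n : nat)
  (Mt : 'I_N.+1 -> {vspace U}) (c : n.-tuple U) : Prop :=
  filt_compatible Mt c /\
  forall i j : 'I_n, (i <= j)%N -> supp Mt (tnth c j) \subset supp Mt (tnth c i).

Definition mx_of (U W : vectType F) (n m : nat) (cU : n.-tuple U) (cW : m.-tuple W)
  (f : 'Hom(U, W)) : 'M[F]_(m, n) :=
  \matrix_(i < m, j < n) coord cW i (f (tnth cU j)).

Definition vec_of (W : vectType F) (m : nat) (cW : m.-tuple W) (x : 'cV[F]_m) : W :=
  \sum_(i < m) x i 0 *: tnth cW i.

(* pivot of column j: the largest (1-based) row index of a nonzero entry;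
   0 for a zero column *)
Definition piv (m n : nat) (X : 'M[F]_(m, n)) (j : 'I_n) : nat :=
  \max_(i < m | X i j != 0) i.+1.

Definition reduced (m n : nat) (X : 'M[F]_(m, n)) : Prop :=
  forall j k : 'I_n, j != k -> col j X != 0 -> col k X != 0 -> piv X j != piv X k.

Definition upper_triangular (n : nat) (V : 'M[F]_n) : Prop :=
  forall i j : 'I_n, (j < i)%N -> V i j = 0.

Definition cols_in (W : vectType F) (m n : nat) (cW : m.-tuple W) (X : 'M[F]_(m, n))
  : seq W :=
  [seq vec_of cW (col j X) | j <- enum 'I_n & col j X != 0].

End Defs.

From HB Require Import structures.
From mathcomp Require Import all_boot all_order all_algebra.
Import GRing.Theory.
Set Implicit Arguments. Unset Strict Implicit. Unset Printing Implicit Defensive.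
Local Open Scope ring_scope.

(* The columns u_j of R^phi and w_j of V^phi satisfy phi(u_j) = d'(w_j), so
   the u_j are cycles and b_j = phi(u_j) lies in M_t as soon as u_j \in C_t
   and w_j \in C'_t.  Conversely, a filtration compatible ordered basis lists
   each C_t as a prefix, so membership in C_t bounds the pivot of the
   coordinate column, and in a reduced matrix the pivot of a combination of
   columns is the largest pivot of the columns involved.  Writing a boundary
   d'(y), y \in C'_t, as d'(V^phi a) = phi(R^phi a) and applying this to the
   reduced matrices V^phi and R^phi shows that M_t is spanned by the b_j with
   u_j \in C_t and w_j \in C'_t.  The nonzero columns of a reduced matrix are
   independent, which gives the basis, and comparing the coefficients of b_j
   gives the support formula. *)

Section Pivots.
Variable F : fieldType.

Lemma ltn_piv m n (X : 'M[F]_(m, n)) i j : X i j != 0 -> (i < piv X j)%N.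
Proof. exact: (@leq_bigmax_cond _ (fun i => X i j != 0) (fun i : 'I_m => i.+1)). Qed.

Lemma piv_leP m n (X : 'M[F]_(m, n)) j k :
  reflect (forall i : 'I_m, (k <= i)%N -> X i j = 0) (piv X j <= k)%N.
Proof.
apply: (iffP (bigmax_leqP _ _ _)) => [le_k i le_ki | X0 i nzXij].
  by apply/eqP; apply: contraTT le_ki => /le_k; rewrite -ltnNge.
by rewrite ltnNge; apply: contra nzXij => /X0 ->.
Qed.

Lemma piv_eq0 m n (X : 'M[F]_(m, n)) j : (piv X j == 0%N) = (col j X == 0).
Proof.
rewrite -leqn0; apply/piv_leP/eqP => [X0 | /colP X0 i _].
  by apply/colP => i; rewrite !mxE X0.
by have := X0 i; rewrite !mxE.
Qed.

Lemma pivP m n (X : 'M[F]_(m, n)) j :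
  (0 < piv X j)%N -> exists2 i : 'I_m, piv X j = i.+1 & X i j != 0.
Proof.
have [i0 nzXi0 _ | X0] := pickP (fun i => X i j != 0).
  rewrite /piv (bigmax_eq_arg i0) //.
  by case: arg_maxnP => // i nzXi _; exists i.
rewrite lt0n piv_eq0 => /eqP[]; apply/colP => i.
by rewrite !mxE; apply/eqP/negbFE/X0.
Qed.

Lemma piv_col m n (X : 'M[F]_(m, n)) j : piv (col j X) 0 = piv X j.
Proof. by apply: eq_bigl => i; rewrite mxE. Qed.

(* The leading entry of the column of largest pivot in the support of [a]
   cannot cancel: a reduced matrix has distinct nonzero pivots. *)
Lemma reduced_piv_mulmx m n (X : 'M[F]_(m, n)) (a : 'cV_n) j :
  reduced X -> a j 0 != 0 -> (piv X j <= piv (X *m a) 0%R)%N.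
Proof.
move=> redX nz_aj.
have [js nz_ajs max_js] := @arg_maxnP _ j (fun k => a k 0 != 0) (piv X) nz_aj.
apply: leq_trans (max_js j nz_aj) _.
have [-> // | /pivP[i piv_js nzXijs]] := posnP (piv X js).
rewrite piv_js; apply: ltn_piv; rewrite mxE (bigD1 js) //= big1 ?addr0 ?mulf_neq0 //.
move=> k ne_kjs; have [-> | nz_ak] := eqVneq (a k 0) 0; first by rewrite mulr0.
suff /piv_leP-> : (piv X k <= i)%N by rewrite ?mul0r.
have [eq_k | ne_k] := eqVneq (piv X k) (piv X js); last first.
  by rewrite -ltnS -piv_js ltn_neqAle ne_k; apply: max_js.
have nz_col l : piv X l = i.+1 -> col l X != 0 by rewrite -piv_eq0 => ->.
by case/eqP: (redX k js ne_kjs (nz_col k (etrans eq_k piv_js)) (nz_col js piv_js)).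
Qed.

Lemma reduced_mulmx_eq0 m n (X : 'M[F]_(m, n)) (a : 'cV_n) j :
  reduced X -> X *m a = 0 -> col j X != 0 -> a j 0 = 0.
Proof.
move=> redX Xa0 nzXj; apply/eqP; apply: contraNT nzXj => /(reduced_piv_mulmx redX).
by rewrite -piv_eq0 -leqn0 Xa0 => /leq_trans; apply; rewrite leqn0 piv_eq0 col0.
Qed.

End Pivots.

Section UpperTriangular.
Variables (F : fieldType) (n : nat) (V : 'M[F]_n).
Hypotheses (V_unit : V \in unitmx) (V_ut : upper_triangular V).

Lemma upper_triangular_unit_diag j : V j j != 0.
Proof.
move: V_unit; rewrite unitmxE -det_tr det_trig.
  by rewrite unitfE => /prodf_neq0/(_ j isT); rewrite mxE.
by apply/is_trig_mxP => i k lt_ik; rewrite mxE V_ut.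
Qed.

Lemma piv_upper_triangular_unit j : piv V j = j.+1.
Proof.
apply/eqP; rewrite eqn_leq ltn_piv ?upper_triangular_unit_diag // andbT.
by apply/piv_leP => i; apply: V_ut.
Qed.

Lemma upper_triangular_unit_reduced : reduced V.
Proof. by move=> j k ne_jk _ _; rewrite !piv_upper_triangular_unit eqSS. Qed.

End UpperTriangular.

Section Coordinates.
Variable F : fieldType.
Implicit Types U W : vectType F.

Lemma col_mulmx m n p (A : 'M[F]_(m, n)) (B : 'M[F]_(n, p)) j :
  col j (A *m B) = A *m col j B.
Proof. by rewrite !colE mulmxA. Qed.

Lemma vec_of0 U n (c : n.-tuple U) : vec_of c 0 = 0.
Proof. by rewrite /vec_of big1 // => i _; rewrite mxE scale0r. Qed.

Lemma vec_of_mulmx U m n (c : m.-tuple U) (A : 'M[F]_(m, n)) a :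
  vec_of c (A *m a) = \sum_j a j 0 *: vec_of c (col j A).
Proof.
rewrite /vec_of; under eq_bigr => i _ do rewrite mxE scaler_suml.
rewrite exchange_big /=; apply: eq_bigr => j _; rewrite scaler_sumr.
by apply: eq_bigr => i _; rewrite !mxE scalerA mulrC.
Qed.

Lemma vec_of_mx_of U W n m (cU : n.-tuple U) (cW : m.-tuple W) (f : 'Hom(U, W)) x :
  basis_of fullv cW -> vec_of cW (mx_of cU cW f *m x) = f (vec_of cU x).
Proof.
move=> basW; rewrite vec_of_mulmx /vec_of linear_sum; apply: eq_bigr => j _.
rewrite linearZ /=; congr (_ *: _).
rewrite [RHS](coord_basis basW (memvf (f (tnth cU j)))).
by apply: eq_bigr => i _; rewrite !mxE (tnth_nth 0 cW).
Qed.

Lemma coord_vec_of U n (c : n.-tuple U) x i :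
  free c -> coord c i (vec_of c x) = x i 0.
Proof.
move=> freec; rewrite -(coord_sum_free (fun i => x i 0) i freec).
by congr (coord c i _); apply: eq_bigr => k _; rewrite (tnth_nth 0).
Qed.

Lemma vec_of_inj U n (c : n.-tuple U) : free c -> injective (vec_of c).
Proof.
move=> freec x y eq_xy; apply/colP => i.
by rewrite -!(coord_vec_of _ _ freec) eq_xy.
Qed.

Lemma vec_of_coord U n (c : n.-tuple U) v :
  basis_of fullv c -> vec_of c (\col_i coord c i v) = v.
Proof.
move=> basc; rewrite [RHS](coord_basis basc (memvf v)).
by apply: eq_bigr => i _; rewrite mxE (tnth_nth 0).
Qed.

Lemma mx_of_unitmx U W n (cU : n.-tuple U) (cW : n.-tuple W) (f : 'Hom(U, W)) :
  free cU -> basis_of fullv cW -> lker f == 0%VS -> mx_of cU cW f \in unitmx.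
Proof.
move=> freeU basW /lker0P injf; rewrite -unitmx_tr -row_free_unit -kermx_eq0.
apply/rowV0P => v /sub_kermxP vF0; apply: trmx_inj; rewrite trmx0.
have Fv0 : mx_of cU cW f *m v^T = 0 by rewrite -[mx_of _ _ _]trmxK -trmx_mul vF0 trmx0.
apply: (vec_of_inj freeU); apply: injf.
by rewrite -(vec_of_mx_of cU _ _ basW) Fv0 !vec_of0 linear0.
Qed.

Lemma cols_in_mx_of U W n p (cU : n.-tuple U) (cW : n.-tuple W) (f : 'Hom(U, W))
    (X : 'M[F]_(n, p)) :
  basis_of fullv cW -> mx_of cU cW f \in unitmx ->
  cols_in cW (mx_of cU cW f *m X) = map f (cols_in cU X).
Proof.
move=> basW Funit; rewrite /cols_in -map_comp.
rewrite (@eq_filter _ _ (fun j => col j X != 0)) => [|j]; last first.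
  rewrite col_mulmx -[Y in _ == Y](mulmx0 _ (mx_of cU cW f)).
  by rewrite (inj_eq (can_inj (mulKmx Funit))).
by apply/eq_map => j; rewrite /= col_mulmx vec_of_mx_of.
Qed.

End Coordinates.

Section FreeFamilies.
Variable F : fieldType.
Implicit Types U W : vectType F.

Lemma free_map_uniq U (I : eqType) (f : I -> U) (s : seq I) : uniq s ->
  (forall k : I -> F, \sum_(j <- s) k j *: f j = 0 -> {in s, forall j, k j = 0}) ->
  free (map f s).
Proof.
elim: s => [|x s IHs] /=; first by rewrite nil_free.
case/andP => s'x uniq_s indep.
have ne_x j : j \in s -> (j == x) = false by move=> sj; apply: contraNF s'x => /eqP <-.
have kx_sum (k : I -> F) kx :
    \sum_(j <- s) [eta k with x |-> kx] j *: f j = \sum_(j <- s) k j *: f j.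
  by apply: eq_big_seq => j sj; rewrite /= ne_x.
have free_s : free (map f s).
  apply: IHs => // k sum0 j sj.
  have sum0' : \sum_(i <- x :: s) [eta k with x |-> 0] i *: f i = 0.
    by rewrite big_cons kx_sum sum0 /= eqxx scale0r add0r.
  by have := indep _ sum0' j; rewrite inE sj orbT /= ne_x // => ->.
rewrite free_cons free_s andbT; apply/negP => /(free_span free_s)[k fx_sum _].
have sum0 : \sum_(i <- x :: s) [eta k \o f with x |-> -1] i *: f i = 0.
  rewrite big_cons kx_sum -(big_map f predT (fun y => k y *: y)) -fx_sum /=.
  by rewrite eqxx scaleN1r addNr.
have /eqP := indep _ sum0 x (mem_head _ _).
by rewrite /= eqxx oppr_eq0 oner_eq0.
Qed.

Lemma lker0_free U W (f : 'Hom(U, W)) (X : seq U) :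
  lker f == 0%VS -> free X -> free (map f X).
Proof.
move=> /eqP ker0 freeX; have basX : basis_of <<X>> X by rewrite /basis_of eqxx.
by apply: basis_free (limg_basis_of _ basX); rewrite ker0 capv0.
Qed.

Lemma free_cols_in U m n (c : m.-tuple U) (X : 'M[F]_(m, n)) :
  free c -> reduced X -> free (cols_in c X).
Proof.
move=> freec redX; apply: free_map_uniq; first by rewrite filter_uniq ?enum_uniq.
move=> k sum0 j; rewrite mem_filter => /andP[nzXj _].
pose a := \col_j (if col j X != 0 then k j else 0).
suff /reduced_mulmx_eq0 : X *m a = 0 by move/(_ j redX nzXj); rewrite mxE nzXj.
apply: (vec_of_inj freec); rewrite vec_of0 vec_of_mulmx -[RHS]sum0.
rewrite big_filter [RHS]big_mkcond enumT; apply: eq_bigr => i _.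
by rewrite mxE; case: ifP => // _; rewrite scale0r.
Qed.

End FreeFamilies.

Section FiltrationBases.
Variables (F : fieldType) (U : vectType F) (N n : nat).
Variables (Ct : 'I_N.+1 -> {vspace U}) (c : n.-tuple U).
Hypothesis c_filt : filt_ordered_basis Ct c.

Lemma filt_ordered_basis_full : Ct ord_max = fullv -> basis_of fullv c.
Proof. by case: c_filt => [[+ _] _] <-. Qed.

Lemma filt_ordered_basis_piv t :
  exists k, forall x, (vec_of c x \in Ct t) = (piv x 0%R <= k)%N.
Proof.
case: c_filt => [[basN basCt] ordc].
pose S i := tnth c i \in Ct t.
pose k := \max_(i | S i) i.+1.
have S_prefix i : S i = (i < k)%N.
  apply/idP/idP => [Si | ]; first exact: leq_bigmax_cond.
  apply: contraTT => nSi; rewrite -leqNgt; apply/bigmax_leqP => j Sj.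
  rewrite ltnNge; apply: contra nSi => le_ji.
  by have /subsetP/(_ t) := ordc i j le_ji; rewrite !inE; apply.
exists k => x; apply/idP/piv_leP => [x_t i le_ki | x0]; last first.
  apply: memv_suml => i _; have [/x0-> | lt_ik] := leqP k i.
    by rewrite scale0r mem0v.
  by rewrite memvZ // -/(S i) S_prefix.
rewrite -(coord_vec_of _ _ (basis_free basN)).
suff /subvP/(_ _ x_t) : (Ct t <= lker (linfun (coord c i : U -> F^o)))%VS.
  by rewrite memv_ker lfunE => /eqP.
rewrite -(span_basis (basCt t)); apply/span_subvP => y.
rewrite mem_filter => /andP[y_t /tnthP[j y_j]]; move: y_t; rewrite y_j => Sj.
rewrite memv_ker lfunE /= (tnth_nth 0) coord_free ?(basis_free basN) //.
suff /negPf-> : j != i by [].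
by apply: contraTneq Sj => ->; rewrite -/(S i) S_prefix -leqNgt.
Qed.

End FiltrationBases.

Section ImageOfCyclesCapBoundaries.
Variables (F : fieldType) (C C' : vectType F) (N n : nat).
Variables (d : 'End(C)) (d' : 'End(C')).
Variables (Ct : 'I_N.+1 -> {vspace C}) (Ct' : 'I_N.+1 -> {vspace C'}).
Variables (c : n.-tuple C) (c' : n.-tuple C') (phi : 'Hom(C, C')).
Variables (Rphi Vphi : 'M[F]_n).

Hypotheses (c_filt : filt_ordered_basis Ct c) (c'_filt : filt_ordered_basis Ct' c').
Hypotheses (Ct_full : Ct ord_max = fullv) (Ct'_full : Ct' ord_max = fullv).
Hypotheses (d'_complex : chain_complex d') (phi_d : (phi \o d = d' \o phi)%VF).
Hypothesis phi_inj : lker phi == 0%VS.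
Hypotheses (Vphi_unit : Vphi \in unitmx) (Vphi_ut : upper_triangular Vphi).
Hypothesis Rphi_red : reduced Rphi.
(* In coordinates, F R^phi = F D F^-1 V^phi = D' V^phi. *)
Hypothesis phiR_d'V : forall a, phi (vec_of c (Rphi *m a)) = d' (vec_of c' (Vphi *m a)).

Local Notation u j := (vec_of c (col j Rphi)).
Local Notation w j := (vec_of c' (col j Vphi)).
Local Notation M t := (phi @: (lker d :&: Ct t) :&: d' @: Ct' t)%VS.

Lemma phi_uE j : phi (u j) = d' (w j).
Proof. by rewrite !colE phiR_d'V. Qed.

Lemma u_cycle j : u j \in lker d.
Proof.
rewrite memv_ker; apply/eqP/(lker0P phi_inj); rewrite linear0.
have /lfunP/(_ (u j)) := phi_d; rewrite !comp_lfunE => ->.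
by have /lfunP/(_ (w j)) := d'_complex; rewrite phi_uE comp_lfunE zero_lfunE.
Qed.

Lemma mem_M_phi_u j t : u j \in Ct t -> w j \in Ct' t -> phi (u j) \in M t.
Proof.
move=> u_t w_t; rewrite memv_cap memv_img ?memv_cap ?u_cycle ?u_t //.
by rewrite phi_uE memv_img.
Qed.

Lemma phi_vec_of_Rphi a : phi (vec_of c (Rphi *m a)) = \sum_j a j 0 *: phi (u j).
Proof. by rewrite vec_of_mulmx linear_sum; apply: eq_bigr => j _; rewrite linearZ. Qed.

Lemma boundary_decomposition t x : x \in (d' @: Ct' t)%VS ->
  exists2 a, x = phi (vec_of c (Rphi *m a)) & forall j, a j 0 != 0 -> w j \in Ct' t.
Proof.
case/memv_imgP => y y_t ->; have [k memCt'] := filt_ordered_basis_piv c'_filt t.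
pose a := invmx Vphi *m \col_i coord c' i y.
have Va : Vphi *m a = \col_i coord c' i y by rewrite mulKVmx.
have basis_c' := filt_ordered_basis_full c'_filt Ct'_full.
exists a => [|j nz_aj]; first by rewrite phiR_d'V Va vec_of_coord.
rewrite memCt' piv_col.
have Vphi_red := upper_triangular_unit_reduced Vphi_unit Vphi_ut.
apply: leq_trans (reduced_piv_mulmx Vphi_red nz_aj) _.
by rewrite -memCt' Va vec_of_coord.
Qed.

Lemma mem_MP t x : x \in M t <->
  exists2 a, x = phi (vec_of c (Rphi *m a)) &
    forall j, a j 0 != 0 -> u j \in Ct t /\ w j \in Ct' t.
Proof.
split=> [|[a -> a_supp]]; last first.
  rewrite phi_vec_of_Rphi; apply: memv_suml => j _.
  have [-> | /a_supp[u_t w_t]] := eqVneq (a j 0) 0; first by rewrite scale0r mem0v.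
  by rewrite memvZ ?mem_M_phi_u.
case/memv_capP => /memv_imgP[z /memv_capP[_ z_t] ->].
case/boundary_decomposition => a phi_z a_supp.
exists a => // j nz_aj; split; last exact: a_supp.
have [k memCt] := filt_ordered_basis_piv c_filt t.
move: z_t; rewrite (lker0P phi_inj _ _ phi_z) !memCt piv_col.
exact/leq_trans/reduced_piv_mulmx.
Qed.

Lemma basis_M t :
  basis_of (M t) [seq x <- map phi (cols_in c Rphi) | x \in M t].
Proof.
have basis_c := filt_ordered_basis_full c_filt Ct_full.
have free_cols : free (map phi (cols_in c Rphi)).
  exact: lker0_free phi_inj (free_cols_in (basis_free basis_c) Rphi_red).
rewrite /basis_of filter_free // andbT eqEsubv; apply/andP; split.
  by apply/span_subvP => x; rewrite mem_filter => /andP[].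
apply/subvP => x /mem_MP[a -> a_supp]; rewrite phi_vec_of_Rphi.
apply: memv_suml => j _; have [-> | nz_aj] := eqVneq (a j 0) 0.
  by rewrite scale0r mem0v.
have [-> | nz_Rj] := eqVneq (col j Rphi) 0.
  by rewrite vec_of0 linear0 scaler0 mem0v.
have [u_t w_t] := a_supp j nz_aj.
rewrite memvZ // memv_span // mem_filter mem_M_phi_u //=.
apply: map_f; apply: (map_f (fun j => u j)).
by rewrite mem_filter nz_Rj mem_enum.
Qed.

Lemma filt_compatible_M :
  filt_compatible (fun t => M t) (map phi (cols_in c Rphi)).
Proof.
split=> [|t]; last exact: basis_M.
suff /all_filterP <- : all (fun x => x \in M ord_max) (map phi (cols_in c Rphi)).
  exact: basis_M.
apply/allP => _ /mapP[_ /mapP[j _ ->] ->].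
by rewrite mem_M_phi_u ?Ct_full ?Ct'_full ?memvf.
Qed.

Lemma supp_M j : col j Rphi != 0 ->
  supp (fun t => M t) (phi (u j)) = (supp Ct (u j) :&: supp Ct' (w j))%SET.
Proof.
move=> nz_Rj; apply/setP => t; rewrite !inE.
apply/idP/andP => [/mem_MP[a phi_uj a_supp] | [u_t w_t]]; last exact: mem_M_phi_u.
have basis_c := filt_ordered_basis_full c_filt Ct_full.
have Ra := vec_of_inj (basis_free basis_c) (lker0P phi_inj _ _ phi_uj).
suff /a_supp[] : a j 0 != 0 by [].
have : Rphi *m (a - delta_mx j 0) = 0 by rewrite mulmxBr -colE Ra subrr.
move/(reduced_mulmx_eq0 Rphi_red)/(_ nz_Rj)/eqP.
by rewrite !mxE eqxx subr_eq0 => /eqP->; apply: oner_neq0.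
Qed.

Lemma filt_compatible_M_supp :
  filt_compatible (fun t => M t) (map phi (cols_in c Rphi)) /\
  forall j, col j Rphi != 0 ->
    supp (fun t => M t) (phi (u j)) = (supp Ct (u j) :&: supp Ct' (w j))%SET.
Proof. by split; [apply: filt_compatible_M | apply: supp_M]. Qed.

End ImageOfCyclesCapBoundaries.

Theorem lemma3p9 (F : fieldType) (C C' : vectType F) (N n : nat)
  (d : 'End(C)) (d' : 'End(C'))
  (Ct : 'I_N.+1 -> {vspace C}) (Ct' : 'I_N.+1 -> {vspace C'})
  (c : n.-tuple C) (c' : n.-tuple C') (phi : 'Hom(C, C'))
  (D D' Fm Dphi V Vphi R Rphi : 'M[F]_n) :
  chain_complex d -> chain_complex d' ->
  filtration_of_complexes d Ct -> filtration_of_complexes d' Ct' ->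
  filt_ordered_basis Ct c -> filt_ordered_basis Ct' c' ->
  D = mx_of c c d -> D' = mx_of c' c' d' ->
  (* phi_. : injective morphism of filtrations of chain complexes, phi_N iso *)
  (phi \o d = d' \o phi)%VF ->
  (forall t, (phi @: Ct t <= Ct' t)%VS) ->
  lker phi = 0%VS -> limg phi = fullv ->
  Fm = mx_of c c' phi ->
  Dphi = D *m invmx Fm ->
  V \in unitmx -> upper_triangular V ->
  Vphi \in unitmx -> upper_triangular Vphi ->
  R = D *m V -> reduced R ->
  Rphi = Dphi *m Vphi -> reduced Rphi ->
  let M := fun t => (phi @: (lker d :&: Ct t) :&: d' @: Ct' t)%VS in
  filt_compatible M (cols_in c' (Fm *m Rphi)) /\
  forall j : 'I_n, col j Rphi != 0 ->
    supp M (vec_of c' (col j (Fm *m Rphi))) =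
    (supp Ct (vec_of c (col j Rphi)) :&: supp Ct' (vec_of c' (col j Vphi)))%SET.
Proof.
move=> _ d'_complex [_ _ Ct_full] [_ _ Ct'_full] c_filt c'_filt D_def _ phi_d _
  /eqP phi_inj _ Fm_def Dphi_def _ _ Vphi_unit Vphi_ut _ _ Rphi_def Rphi_red M.
have basis_c := filt_ordered_basis_full c_filt Ct_full.
have basis_c' := filt_ordered_basis_full c'_filt Ct'_full.
have Fm_unit : Fm \in unitmx by rewrite Fm_def mx_of_unitmx ?(basis_free basis_c).
have phiR_d'V a : phi (vec_of c (Rphi *m a)) = d' (vec_of c' (Vphi *m a)).
  pose y := invmx Fm *m (Vphi *m a).
  rewrite Rphi_def Dphi_def -!mulmxA -/y D_def vec_of_mx_of //.
  have /lfunP/(_ (vec_of c y)) := phi_d; rewrite !comp_lfunE => ->.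
  by rewrite -(vec_of_mx_of c phi y basis_c') -Fm_def mulKVmx.
have [compat supp_eq] := filt_compatible_M_supp c_filt c'_filt Ct_full Ct'_full
  d'_complex phi_d phi_inj Vphi_unit Vphi_ut Rphi_red phiR_d'V.
rewrite Fm_def (cols_in_mx_of _ basis_c') -?Fm_def //; split=> // j nz_Rj.
by rewrite col_mulmx Fm_def vec_of_mx_of // supp_eq.
Qed.
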